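(* Autarky reduction is confluent: for every DQCNF $F$, any two sequences of autarky-reduction steps starting from $F$ and continued until no further step is possible end in the same DQCNF (i.e. with the same clause set).
   Context: A DQCNF $F$ consists of a set $X$ of universal variables, a set $Y$ of existential variables, a dependency set $D_y\subseteq X$ for each $y\in Y$, and a matrix, a finite set of clauses over $X\cup Y$. An autarky for $F$ is a partial map $\varphi$ from a subset $\mathrm{dom}(\varphi)\subseteq Y$ to Boolean functions, where $\varphi(y)$ depends only on variables in $D_y$, such that every clause $C$ of $F$ either contains no variable of $\mathrm{dom}(\varphi)$ (then $\varphi$ does not touch $C$), or becomes a tautology (identically true as a function of all remaining variables) after substituting $\varphi(y)$ for each $y\in\mathrm{dom}(\varphi)$ occurring in $C$. An autarky is trivial if it touches no clause. $F[\varphi]$ denotes the DQCNF with the same variables and dependency sets as $F$ whose matrix consists of the clauses of $F$ not touched by $\varphi$. An autarky-reduction step replaces a DQCNF $G$ by $G[\varphi]$ for some non-trivial autarky $\varphi$ of $G$. *)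

From mathcomp Require Import all_boot.
From Stdlib Require Import Relations.
Set Implicit Arguments. Unset Strict Implicit. Unset Printing Implicit Defensive.

(* Since autarky reduction only changes the matrix, the variables and the
   dependency sets are fixed parameters and a DQCNF is represented by its
   matrix. *)

(* A literal is a variable (universal [inl x] or existential [inr y]) with a
   polarity ([true] = positive, [false] = negative). *)
Definition lit (X Y : finType) := ((X + Y) * bool)%type.
Definition clause (X Y : finType) := {set lit X Y}.
Definition matrix (X Y : finType) := {set clause X Y}.

Definition boolfun (X : finType) := (X -> bool) -> bool.

Definition pmap (X Y : finType) := Y -> option (boolfun X).

Section Autarky.
Variables (X Y : finType) (D : Y -> {set X}).

Definition respects_deps (phi : pmap X Y) : Prop :=
  forall y f, phi y = Some f ->
    forall a b : X -> bool, (forall x, x \in D y -> a x = b x) -> f a = f b.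

Definition touches (phi : pmap X Y) (C : clause X Y) : bool :=
  [exists l in C, if l.1 is inr y then isSome (phi y) else false].

Definition lit_val (a : X -> bool) (b : Y -> bool) (l : lit X Y) : bool :=
  (if l.1 is inl x then a x else if l.1 is inr y then b y else false) == l.2.

Definition subst_assign (phi : pmap X Y) (a : X -> bool) (b : Y -> bool)
  : Y -> bool :=
  fun y => if phi y is Some f then f a else b y.

Definition taut_after (phi : pmap X Y) (C : clause X Y) : Prop :=
  forall (a : X -> bool) (b : Y -> bool),
    exists2 l, l \in C & lit_val a (subst_assign phi a b) l.

Definition autarky (F : matrix X Y) (phi : pmap X Y) : Prop :=
  respects_deps phi /\
  forall C, C \in F -> touches phi C -> taut_after phi C.

Definition nontrivial (F : matrix X Y) (phi : pmap X Y) : Prop :=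
  exists2 C, C \in F & touches phi C.

Definition reduce (F : matrix X Y) (phi : pmap X Y) : matrix X Y :=
  [set C in F | ~~ touches phi C].

Definition aut_step (F G : matrix X Y) : Prop :=
  exists phi, [/\ autarky F phi, nontrivial F phi & G = reduce F phi].

Definition aut_irreducible (F : matrix X Y) : Prop :=
  forall G, ~ aut_step F G.

End Autarky.

(* Autarkies restrict to sub-matrices, so an irreducible G has no autarky
   touching it.  Hence if G is contained in F, every reduction step from F
   removes only clauses outside G, and G stays contained in every matrix
   reachable from F.  Two irreducible normal forms G, H of F therefore
   contain each other. *)
From Pilot Require Import Defs.
From mathcomp Require Import all_boot.
From Stdlib Require Import Relations.
Set Implicit Arguments. Unset Strict Implicit. Unset Printing Implicit Defensive.

Section AutarkyReduction.
Variables (X Y : finType) (D : Y -> {set X}).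

Local Notation aut_steps := (Relation_Operators.clos_refl_trans _ (aut_step D)).

Lemma reduce_subset (F : matrix X Y) (phi : Defs.pmap X Y) : reduce F phi \subset F.
Proof. by apply/subsetP=> C; rewrite inE => /andP[]. Qed.

Lemma autarkyS (F G : matrix X Y) (phi : Defs.pmap X Y) :
  G \subset F -> autarky D F phi -> autarky D G phi.
Proof. by move=> sGF [deps taut]; split=> // C /(subsetP sGF); apply: taut. Qed.

Lemma irreducible_untouched (G : matrix X Y) (phi : Defs.pmap X Y) C :
  aut_irreducible D G -> autarky D G phi -> C \in G -> ~~ touches phi C.
Proof.
move=> irrG autG CG; apply/negP=> tC.
by apply: (irrG (reduce G phi)); exists phi; split=> //; exists C.
Qed.

Lemma irreducible_subset_reduce (F G : matrix X Y) (phi : Defs.pmap X Y) :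
  aut_irreducible D G -> G \subset F -> autarky D F phi ->
  G \subset reduce F phi.
Proof.
move=> irrG sGF autF; apply/subsetP=> C CG.
rewrite inE (subsetP sGF _ CG) /=.
exact: irreducible_untouched irrG (autarkyS sGF autF) CG.
Qed.

Lemma aut_steps_subset (F G : matrix X Y) : aut_steps F G -> G \subset F.
Proof.
elim=> [A B [phi [_ _ ->]]|A|A B C _ sBA _ sCB].
- exact: reduce_subset.
- exact: subxx.
- exact: subset_trans sCB sBA.
Qed.

Lemma irreducible_subset_steps (F F' G : matrix X Y) :
  aut_irreducible D G -> aut_steps F F' -> G \subset F -> G \subset F'.
Proof.
move=> irrG; elim=> [A B [phi [autA _ ->]]|//|A B C _ IHAB _ IHBC sGA].
- by move=> sGA; apply: irreducible_subset_reduce irrG sGA autA.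
- exact: IHBC (IHAB sGA).
Qed.

End AutarkyReduction.

Theorem lemma2 (X Y : finType) (D : Y -> {set X}) (F G H : matrix X Y) :
  Relation_Operators.clos_refl_trans _ (aut_step D) F G -> aut_irreducible D G ->
  Relation_Operators.clos_refl_trans _ (aut_step D) F H -> aut_irreducible D H ->
  G = H.
Proof.
move=> FG irrG FH irrH; apply/eqP; rewrite eqEsubset.
rewrite (irreducible_subset_steps irrG FH (aut_steps_subset FG)).
by rewrite (irreducible_subset_steps irrH FG (aut_steps_subset FH)).
Qed.
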